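(* Let $\mathcal{G}$ be a pdCG and let $\mathcal{A}$ be a set of pdCGs such that (i) the graphs in $\mathcal{A}$ are pairwise $\preceq_{t}$-incomparable and (ii) every $\mathcal{F}\in \mathcal{A}$ is covered by $\mathcal{G}$ in the model inclusion order, so that $\mathcal{P}(\mathcal{F})$ is a neighbouring submodel of $\mathcal{P}(\mathcal{G})$. Then, for every $\mathcal{H}\in\mathcal{A}$ the set $$\mathcal{B}=\{\mathcal{F} \wedge_{s} \mathcal{H} \mid \mathcal{F} \in \mathcal{A} \setminus \{\mathcal{H}\}\}=\{\mathcal{F} \wedge_{t} \mathcal{H} \mid \mathcal{F} \in \mathcal{A} \setminus \{\mathcal{H}\}\}$$ has the same properties as $\mathcal{A}$, that is, (i) the graphs in $\mathcal{B}$ are pairwise $\preceq_{t}$-incomparable and (ii) every $\mathcal{F}\in \mathcal{B}$ is covered by $\mathcal{H}$ in the model inclusion order, so that $\mathcal{P}(\mathcal{F})$ is a neighbouring submodel of $\mathcal{P}(\mathcal{H})$.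
   Context: Let $V=\{1,\dots,p\}$ and let $\tau$ be a twin-pairing function on $V$, i.e. $\tau(i)\in V$ with $\tau(\tau(i))=i$ and $\tau(i)\neq i$; it is extended to edges by $\tau(i,j)=(\tau(i),\tau(j))$ (endpoints reordered so the smaller comes first) and to sets elementwise. Fix a partition $(L,R)$ of $V$ with $\tau(L)=R$, numbered so that $L=\{1,\dots,q\}$, $R=\{q+1,\dots,p\}$. Let $F_V=\{(i,j): i,j\in V, i<j\}$, $F_L=\{(i,j)\in F_V: i<\tau(j)\}$, $F_R=\{(i,j)\in F_V: i>\tau(j)\}$. A coloured graph $\mathcal G=(\mathcal V,\mathcal E)$ consists of a partition $\mathcal V$ of $V$ into vertex colour classes and a partition $\mathcal E$ of an edge set $E\subseteq F_V$ into edge colour classes. It is a coloured graph for paired data (pdCG) if every colour class is either atomic (a single element) or twin-pairing (of the form $\{i,\tau(i)\}$ or $\{(i,j),\tau(i,j)\}$ with $(i,j)\neq\tau(i,j)$). The associated RCON model for paired data $\mathcal{P}(\mathcal G)$ is the family of Gaussian distributions whose concentration matrix has zero entries for missing edges and equal entries for vertices or edges in the same colour class; $\mathcal{P}$ denotes the family of all pdCGs on $V$. Every pdCG is equivalently represented by the quadruplet $(V,E,\mathbb L,\mathbb E)$ where $E$ is the union of the edge colour classes, $E_L=E\cap F_L$, $E_R=E\cap F_R$, $\mathbb L=\{i\in L:\{i\}\in\mathcal V\}$ and $\mathbb E=\{(i,j)\in E_L\cap\tau(E_R): \{(i,j)\}\in\mathcal E\}$. The model inclusion order is $\mathcal H\preceq_s\mathcal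 G$ iff $\mathcal P(\mathcal H)\subseteq\mathcal P(\mathcal G)$ (iff the edge set of $\mathcal H$ is contained in that of $\mathcal G$ and every vertex, resp. edge, colour class of $\mathcal H$ is a union of vertex, resp. edge, colour classes of $\mathcal G$); $\mathcal H$ is covered by $\mathcal G$ in this order if $\mathcal H\prec_s\mathcal G$ and no $\mathcal F\in\mathcal P$ satisfies $\mathcal H\prec_s\mathcal F\prec_s\mathcal G$; $\wedge_s$ denotes the meet in the lattice $\langle\mathcal P,\preceq_s\rangle$. The twin order is $\mathcal H\preceq_t\mathcal G$ iff $E_{\mathcal H}\subseteq E_{\mathcal G}$, $\mathbb L_{\mathcal H}\subseteq\mathbb L_{\mathcal G}$ and $\mathbb E_{\mathcal H}\subseteq\mathbb E_{\mathcal G}$; $\langle\mathcal P,\preceq_t\rangle$ is a lattice whose meet is $\mathcal G\wedge_t\mathcal H=(V,E_{\mathcal G}\cap E_{\mathcal H},\mathbb L_{\mathcal G}\cap\mathbb L_{\mathcal H},\mathbb E_{\mathcal G}\cap\mathbb E_{\mathcal H})$. *)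

(* Vertices V = {1..p} are modelled 0-based as 'I_p;
   L = {i | i < q}, R = complement of L. *)
From mathcomp Require Import all_boot.
Set Implicit Arguments. Unset Strict Implicit. Unset Printing Implicit Defensive.

Definition union_of (T : finType) (P : {set {set T}}) (C : {set T}) : Prop :=
  exists S : {set {set T}}, S \subset P /\ C = cover S.

Section PairedData.
Variables (p q : nat) (tau : 'I_p -> 'I_p).

Definition Lset : {set 'I_p} := [set i : 'I_p | i < q].
Definition Rset : {set 'I_p} := ~: Lset.

Definition edge := ('I_p * 'I_p)%type.
Definition FV : {set edge} := [set e : edge | e.1 < e.2].
Definition tau_e (e : edge) : edge :=
  if tau e.1 < tau e.2 then (tau e.1, tau e.2) else (tau e.2, tau e.1).
Definition FL : {set edge} := [set e in FV | e.1 < tau e.2].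
Definition FR : {set edge} := [set e in FV | tau e.2 < e.1].

Definition CG := ({set {set 'I_p}} * {set {set edge}})%type.
Definition vcol (G : CG) := G.1.
Definition ecol (G : CG) := G.2.
Definition Eset (G : CG) : {set edge} := cover (ecol G).

Definition is_CG (G : CG) : bool :=
  [&& partition (vcol G) [set: 'I_p], partition (ecol G) (Eset G)
    & Eset G \subset FV].

Definition is_pdCG (G : CG) : bool :=
  [&& is_CG G,
      [forall C in vcol G, exists i, (C == [set i]) || (C == [set i; tau i])]
    & [forall D in ecol G, exists e,
          (D == [set e]) || ((D == [set e; tau_e e]) && (e != tau_e e))]].

Definition le_s (H G : CG) : Prop :=
  [/\ Eset H \subset Eset G,
      (forall C, C \in vcol H -> union_of (vcol G) C)
    & (forall D, D \in ecol H -> union_of (ecol G) D)].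
Definition lt_s (H G : CG) : Prop := le_s H G /\ H <> G.
Definition covered (H G : CG) : Prop :=
  lt_s H G /\ ~ (exists F, is_pdCG F /\ lt_s H F /\ lt_s F G).

Definition is_meet_s (F H M : CG) : Prop :=
  [/\ is_pdCG M, le_s M F, le_s M H
    & forall K, is_pdCG K -> le_s K F -> le_s K H -> le_s K M].

Definition Lbb (G : CG) : {set 'I_p} := [set i in Lset | [set i] \in vcol G].
Definition Ebb (G : CG) : {set edge} :=
  [set e in (Eset G :&: FL) :&: (tau_e @: (Eset G :&: FR)) | [set e] \in ecol G].
Definition le_t (H G : CG) : Prop :=
  [/\ Eset H \subset Eset G, Lbb H \subset Lbb G & Ebb H \subset Ebb G].
Definition is_meet_t (F H M : CG) : Prop :=
  [/\ is_pdCG M, Eset M = Eset F :&: Eset H, Lbb M = Lbb F :&: Lbb H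
    & Ebb M = Ebb F :&: Ebb H].

Definition t_incomparable (A : CG -> Prop) : Prop :=
  forall F1 F2, A F1 -> A F2 -> F1 <> F2 -> ~ le_t F1 F2.
Definition meets_s (A : CG -> Prop) (H : CG) : CG -> Prop :=
  fun M => exists F, [/\ A F, F <> H & is_meet_s F H M].
Definition meets_t (A : CG -> Prop) (H : CG) : CG -> Prop :=
  fun M => exists F, [/\ A F, F <> H & is_meet_t F H M].
End PairedData.

From mathcomp Require Import all_boot zify.
Set Implicit Arguments. Unset Strict Implicit. Unset Printing Implicit Defensive.

(* Record a pdCG by its atoms: atomic vertices, edges and atomic edges.  The
   atom sets of pdCGs are exactly the sets closed under a few twin rules, and
   on them <=_s is inclusion.  So F is covered by G iff passing from G to F
   loses exactly one twin-related pair of atoms, and the <=_s-meet is the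
   intersection of atom sets whenever that intersection is closed.
   For distinct F, F' covered by G the lost pairs are disjoint: a shared atom
   forces the same pair, except for an atomic edge lost together with its edge
   in one graph and with its twin in the other, and then F' <=_t F.  Hence the
   atom sets of F and H meet in a closed set; it is the atom set of both
   F /\_s H and F /\_t H (on closed sets the twin-order data determine the
   atoms), and it misses from H exactly the pair lost by F.  That pair is
   present in F /\ H, absent from F' /\ H, and visible in the twin-order data,
   so the meets are <=_t-incomparable. *)

Lemma trivIset_block_eq (T : finType) (P : {set {set T}}) B1 B2 x :
  trivIset P -> B1 \in P -> B2 \in P -> x \in B1 -> x \in B2 -> B1 = B2.
Proof.
by move=> tI P1 P2 x1 x2; rewrite -(def_pblock tI P1 x1) -(def_pblock tI P2 x2).
Qed.

Lemma mem_cover (T : finType) (P : {set {set T}}) B x :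
  B \in P -> x \in B -> x \in cover P.
Proof. by move=> BP xB; apply/bigcupP; exists B. Qed.

Lemma union_of_set1 (T : finType) (P : {set {set T}}) x :
  union_of P [set x] -> [set x] \in P.
Proof.
case=> S [/subsetP sSP eqC].
have /bigcupP [B BS xB] : x \in cover S by rewrite -eqC set11.
suff -> : [set x] = B by apply: sSP.
apply/eqP; rewrite eqEsubset sub1set xB /=.
by apply/subsetP => y yB; rewrite eqC; apply: mem_cover BS yB.
Qed.

Lemma union_of_mem (T : finType) (P : {set {set T}}) B : B \in P -> union_of P B.
Proof. by move=> BP; exists [set B]; rewrite sub1set cover1. Qed.

Lemma cover_set2 (T : finType) (A B : {set T}) : cover [set A; B] = A :|: B.
Proof. by rewrite /cover bigcup_setU !big_set1. Qed.

Lemma setDDK (T : finType) (A B : {set T}) : B \subset A -> A :\: (A :\: B) = B.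
Proof. by move=> sBA; rewrite setDDr setDv set0U; apply/setIidPr. Qed.

Lemma setD_setD1_2 (T : finType) (A : {set T}) a b :
  a \in A -> b \in A -> A :\: (A :\ a :\ b) = [set b; a].
Proof.
move=> aA bA; apply/setP => w; rewrite !inE.
have [->|_] := eqVneq w b; first by rewrite bA.
by have [->|_] := eqVneq w a; rewrite ?aA ?andNb.
Qed.

Lemma set2_eq (T : finType) (a b u v : T) :
  u != v -> u \in [set a; b] -> v \in [set a; b] -> [set a; b] = [set u; v].
Proof.
rewrite !inE => nuv /orP[]/eqP eu /orP[]/eqP ev; subst u v; rewrite ?eqxx // in nuv.
exact: setUC.
Qed.

Lemma set2_no_triple (T : finType) (a b x y z : T) :
  x != y -> x != z -> y != z ->
  x \in [set a; b] -> y \in [set a; b] -> z \in [set a; b] -> False.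
Proof.
move=> nxy nxz nyz; rewrite !inE.
by move=> /orP[/eqP ?|/eqP ?] /orP[/eqP ?|/eqP ?] /orP[/eqP ?|/eqP ?];
  subst; rewrite ?eqxx in nxy nxz nyz.
Qed.

Section PairedData.
Variables (p q : nat) (tau : 'I_p -> 'I_p).
Hypothesis tau_invol : involutive tau.
Hypothesis tau_nofix : forall i, tau i != i.
Hypothesis tau_LR : tau @: Lset p q = Rset p q.

Local Notation te := (tau_e tau).

Lemma tau_e_FV e : e \in FV p -> te e \in FV p.
Proof.
case: e => a b; rewrite /tau_e !inE /= => ab.
have nab : tau a != tau b.
  by apply: contraTneq ab => /(can_inj tau_invol) ->; rewrite ltnn.
case: (ltnP (tau a) (tau b)) => //= h; rewrite ltn_neqAle h andbT.
by apply: contra nab => /eqP/val_inj ->.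
Qed.

Lemma tau_eK : {in FV p, involutive te}.
Proof.
case=> a b; rewrite inE /= => ab; rewrite /tau_e /=.
case: (ltnP (tau a) (tau b)) => h /=; rewrite !tau_invol; first by rewrite ab.
by rewrite ltnNge (ltnW ab).
Qed.

Lemma tau_e_inj : {in FV p &, injective te}.
Proof. exact: can_in_inj tau_eK. Qed.

Lemma tau_ltq i : (tau i < q) = ~~ (i < q).
Proof.
case: (boolP (i < q)) => iq /=.
  have : tau i \in tau @: Lset p q by apply: imset_f; rewrite inE.
  by rewrite tau_LR !inE => /negbTE.
have : i \in Rset p q by rewrite !inE.
by rewrite -tau_LR => /imsetP[k]; rewrite inE => kq ->; rewrite tau_invol.
Qed.

Lemma FL_tau_e e : e \in FL tau -> te e \in FR tau.
Proof.
move=> h; have eF : e \in FV p by move: h; rewrite inE => /andP[].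
rewrite inE tau_e_FV //=; move: h; case: e eF => a b; rewrite !inE /= => ab /andP[_ atb].
have La := tau_ltq a; have Lb := tau_ltq b.
rewrite /tau_e; case: (ltnP (tau a) (tau b)) => h /=; rewrite tau_invol //.
move: La Lb; case: (ltnP a q) => aq /= La; case: (ltnP b q) => bq /= Lb; lia.
Qed.

Lemma FR_tau_e e : e \in FR tau -> te e \in FL tau.
Proof.
move=> h; have eF : e \in FV p by move: h; rewrite inE => /andP[].
rewrite inE tau_e_FV //=; move: h; case: e eF => a b; rewrite !inE /= => ab /andP[_ atb].
by rewrite /tau_e; case: (ltnP (tau a) (tau b)) => h /=; rewrite tau_invol //; lia.
Qed.

Lemma FL_or_FR e : e \in FV p -> te e != e -> (e \in FL tau) || (e \in FR tau).
Proof.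
case: e => a b; rewrite !inE /= => ab ne; rewrite ab /=.
case: (ltngtP a (tau b)) => // h; move: ne; rewrite /tau_e /=.
have tb : tau b = a by apply: val_inj; rewrite /= -h.
have ta : tau a = b by rewrite -tb tau_invol.
by rewrite ta tb ltnNge (ltnW ab) /= eqxx.
Qed.

(** * Colour classes of a pdCG *)

Lemma pdCGP X : is_pdCG tau X ->
  [/\ partition (vcol X) [set: 'I_p], partition (ecol X) (Eset X),
      Eset X \subset FV p,
      forall C, C \in vcol X -> exists i, C = [set i] \/ C = [set i; tau i]
    & forall D, D \in ecol X -> exists e, D = [set e] \/ D = [set e; te e] /\ e != te e].
Proof.
case/and3P => /and3P[Pv Pe sub] /forallP Hv /forallP He; split => //.
- move=> C CP; move: (Hv C); rewrite CP /= => /existsP[i /orP[/eqP->|/eqP->]].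
    by exists i; left.
  by exists i; right.
- move=> D DP; move: (He D); rewrite DP /= => /existsP[e /orP[/eqP->|/andP[/eqP-> ne]]].
    by exists e; left.
  by exists e; right.
Qed.

Section PdCGClasses.
Variable X : CG p.
Hypothesis HX : is_pdCG tau X.

Let vcol_trivIset : trivIset (vcol X).
Proof. by have [/and3P[]] := pdCGP HX. Qed.

Let ecol_trivIset : trivIset (ecol X).
Proof. by have [_ /and3P[]] := pdCGP HX. Qed.

Lemma Eset_FV e : e \in Eset X -> e \in FV p.
Proof. by have [_ _ /subsetP sub _ _] := pdCGP HX; apply: sub. Qed.

Lemma vcol_set2 i : [set i] \notin vcol X -> [set i; tau i] \in vcol X.
Proof.
move=> ni; have [/and3P[/eqP cv _ _] _ _ Cv _] := pdCGP HX.
have ic : i \in cover (vcol X) by rewrite cv inE.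
have Bm := pblock_mem ic.
have iB : i \in pblock (vcol X) i by rewrite mem_pblock.
case: (Cv _ Bm) => j [E|E]; rewrite E in Bm iB.
  by move: iB; rewrite inE => /eqP ij; subst j; rewrite Bm in ni.
move: iB; rewrite !inE => /orP[/eqP->//|/eqP ij].
have ji : j = tau i by rewrite ij tau_invol.
by move: Bm; rewrite ji tau_invol setUC.
Qed.

Lemma vcol_set2_set1 i : [set i; tau i] \in vcol X -> [set i] \notin vcol X.
Proof.
move=> h; apply/negP => h1.
have E : [set i; tau i] = [set i].
  by apply: (trivIset_block_eq (x := i) vcol_trivIset h h1); rewrite !inE eqxx.
have : tau i \in [set i] by rewrite -E !inE eqxx orbT.
by rewrite inE (negbTE (tau_nofix i)).
Qed.

Lemma vcol_set1_tau i : [set i] \in vcol X -> [set tau i] \in vcol X.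
Proof.
move=> h; apply: contraT => /vcol_set2; rewrite tau_invol setUC.
by move/vcol_set2_set1; rewrite h.
Qed.

Lemma ecol_set2 e : e \in Eset X -> [set e] \notin ecol X ->
  [set e; te e] \in ecol X /\ te e != e.
Proof.
move=> ec ne; have [_ _ /subsetP sub _ Ce] := pdCGP HX.
have Bm := pblock_mem ec.
have iB : e \in pblock (ecol X) e by rewrite mem_pblock.
case: (Ce _ Bm) => f [E|[E nf]]; rewrite E in Bm iB.
  by move: iB; rewrite inE => /eqP ij; subst f; rewrite Bm in ne.
move: iB; rewrite !inE => /orP[/eqP ef|/eqP ef].
  by subst f; rewrite eq_sym.
have fF : f \in FV p by apply: sub; apply: (mem_cover Bm); rewrite !inE eqxx.
by rewrite ef tau_eK // setUC.
Qed.

Lemma ecol_set2_set1 e : [set e; te e] \in ecol X -> te e != e -> [set e] \notin ecol X.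
Proof.
move=> h ne; apply/negP => h1.
have E : [set e; te e] = [set e].
  by apply: (trivIset_block_eq (x := e) ecol_trivIset h h1); rewrite !inE eqxx.
have : te e \in [set e] by rewrite -E !inE eqxx orbT.
by rewrite inE (negbTE ne).
Qed.

Lemma ecol_set1_tau e : [set e] \in ecol X -> te e \in Eset X -> [set te e] \in ecol X.
Proof.
move=> h tE; have eF := Eset_FV (mem_cover h (set11 e)).
apply: contraT => /(ecol_set2 tE); rewrite tau_eK // setUC eq_sym => -[h2 ne].
by rewrite (negbTE (ecol_set2_set1 h2 ne)) in h.
Qed.

End PdCGClasses.

(** * Atoms *)

Definition atom := ('I_p + (edge p + edge p))%type.
Local Notation Vat i := (inl i : atom).
Local Notation Ed e := (inr (inl e) : atom).
Local Notation Eat e := (inr (inr e) : atom).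

(* [Vat i]: {i} is a vertex class; [Ed e]: e is an edge; [Eat e]: {e} is an
   edge class.  All other colour classes of a pdCG are then twin pairs. *)
Definition atoms (X : CG p) : {set atom} :=
  [set u | match u with
           | inl i => [set i] \in vcol X
           | inr (inl e) => e \in Eset X
           | inr (inr e) => [set e] \in ecol X
           end].

Lemma atoms_Vat X i : (Vat i \in atoms X) = ([set i] \in vcol X).
Proof. by rewrite inE. Qed.
Lemma atoms_Ed X e : (Ed e \in atoms X) = (e \in Eset X).
Proof. by rewrite inE. Qed.
Lemma atoms_Eat X e : (Eat e \in atoms X) = ([set e] \in ecol X).
Proof. by rewrite inE. Qed.

Lemma eq_Vat i j : (Vat i == Vat j) = (i == j). Proof. by []. Qed.
Lemma eq_Ed e f : (Ed e == Ed f) = (e == f). Proof. by []. Qed.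
Lemma eq_Eat e f : (Eat e == Eat f) = (e == f). Proof. by []. Qed.
Definition atom_eqE := (eq_Vat, eq_Ed, eq_Eat).

Record pd_closed (S : {set atom}) : Prop := PdClosed {
  Vat_tau : forall i, (Vat i \in S) = (Vat (tau i) \in S);
  Eat_Ed : forall e, Eat e \in S -> Ed e \in S;
  Ed_twin : forall e, Ed e \in S -> Eat e \notin S ->
    [/\ Ed (te e) \in S, Eat (te e) \notin S & te e != e];
  Eat_twin : forall e, Ed e \in S -> Ed (te e) \in S -> Eat e \in S -> Eat (te e) \in S;
  Ed_FV : forall e, Ed e \in S -> e \in FV p }.

Lemma atoms_pd_closed X : is_pdCG tau X -> pd_closed (atoms X).
Proof.
move=> HX; split.
- move=> i; rewrite !atoms_Vat; apply/idP/idP; first exact: vcol_set1_tau.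
  by move/(vcol_set1_tau HX); rewrite tau_invol.
- by move=> e; rewrite atoms_Eat atoms_Ed => /mem_cover; apply; rewrite set11.
- move=> e; rewrite !atoms_Ed !atoms_Eat => eE nA.
  have [h ne] := ecol_set2 HX eE nA.
  split=> //; first by apply: (mem_cover h); rewrite !inE eqxx orbT.
  have eF := Eset_FV HX eE.
  by apply: (ecol_set2_set1 HX); rewrite tau_eK // 1?setUC // eq_sym.
- by move=> e; rewrite !atoms_Ed !atoms_Eat => _ tE eA; apply: ecol_set1_tau.
- by move=> e; rewrite atoms_Ed; apply: Eset_FV.
Qed.

Lemma le_s_atoms X Y : is_pdCG tau X -> is_pdCG tau Y ->
  le_s X Y <-> atoms X \subset atoms Y.
Proof.
move=> HX HY; split.
  case=> sE Hv He; apply/subsetP => -[i|[e|e]]; rewrite !inE /=.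
  - by move/Hv/union_of_set1.
  - by move/(subsetP sE).
  - by move/He/union_of_set1.
move/subsetP => sub; have [_ _ _ Cv Ce] := pdCGP HX.
have sE : Eset X \subset Eset Y.
  by apply/subsetP => e; have := sub (Ed e); rewrite !atoms_Ed.
split => //.
- move=> C CP; have [i [CE|CE]] := Cv C CP; subst C.
    by apply: union_of_mem; rewrite -atoms_Vat; apply: sub; rewrite atoms_Vat.
  have [iY|/(vcol_set2 HY)] := boolP ([set i] \in vcol Y); last exact: union_of_mem.
  exists [set [set i]; [set tau i]]; rewrite cover_set2; split => //.
  by apply/subsetP => B; rewrite !inE => /orP[]/eqP->; rewrite ?vcol_set1_tau.
- move=> D DP; have [e [DE|[DE ne]]] := Ce D DP; subst D.
    by apply: union_of_mem; rewrite -atoms_Eat; apply: sub; rewrite atoms_Eat.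
  have eY : e \in Eset Y by apply: (subsetP sE); apply: (mem_cover DP); rewrite !inE eqxx.
  have tY : te e \in Eset Y.
    by apply: (subsetP sE); apply: (mem_cover DP); rewrite !inE eqxx orbT.
  have [iY|/(ecol_set2 HY eY) []] := boolP ([set e] \in ecol Y).
    exists [set [set e]; [set te e]]; rewrite cover_set2; split => //.
    by apply/subsetP => B; rewrite !inE => /orP[]/eqP->; rewrite ?ecol_set1_tau.
  by move=> /union_of_mem.
Qed.

Lemma atoms_col_sub X Y : is_pdCG tau X -> is_pdCG tau Y -> atoms X = atoms Y ->
  vcol X \subset vcol Y /\ ecol X \subset ecol Y.
Proof.
move=> HX HY E; have [_ _ _ Cv Ce] := pdCGP HX.
split; apply/subsetP.
- move=> C CP; have [i [CE|CE]] := Cv C CP; subst C.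
    by rewrite -atoms_Vat -E atoms_Vat.
  apply: (vcol_set2 HY).
  by rewrite -atoms_Vat -E atoms_Vat; apply: vcol_set2_set1.
- move=> D DP; have [e [DE|[DE ne]]] := Ce D DP; subst D.
    by rewrite -atoms_Eat -E atoms_Eat.
  have eY : e \in Eset Y.
    by rewrite -atoms_Ed -E atoms_Ed; apply: (mem_cover DP); rewrite !inE eqxx.
  have [] // := ecol_set2 HY eY.
  by rewrite -atoms_Eat -E atoms_Eat; apply: ecol_set2_set1; rewrite // eq_sym.
Qed.

Lemma atoms_inj X Y : is_pdCG tau X -> is_pdCG tau Y -> atoms X = atoms Y -> X = Y.
Proof.
move=> HX HY E.
have [sv se] := atoms_col_sub HX HY E; have [sv' se'] := atoms_col_sub HY HX (esym E).
case: X sv se sv' se' {HX E} => vx ex; case: Y {HY} => vy ey /= sv se sv' se'.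
by congr pair; apply/eqP; rewrite eqEsubset ?sv ?se ?sv' ?se'.
Qed.

Section Realization.
Variable S : {set atom}.
Hypothesis cS : pd_closed S.

Definition vtwin_rel (i j : 'I_p) := (j == i) || (Vat i \notin S) && (j == tau i).
Definition etwin_rel (e f : edge p) := (f == e) || (Eat e \notin S) && (f == te e).
Definition Ed_dom := [set e | Ed e \in S].

Lemma vtwin_rel_equiv : {in [set: 'I_p] & &, equivalence_rel vtwin_rel}.
Proof.
move=> x y z _ _ _; split; first by rewrite /vtwin_rel eqxx.
rewrite /vtwin_rel => /orP[/eqP->//|/andP[xS /eqP->]].
by rewrite -(Vat_tau cS) xS tau_invol /= orbC.
Qed.

Lemma etwin_rel_equiv : {in Ed_dom & &, equivalence_rel etwin_rel}.
Proof.
move=> x y z; rewrite inE => xD _ _; split; first by rewrite /etwin_rel eqxx.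
rewrite /etwin_rel => /orP[/eqP->//|/andP[xS /eqP->]].
have [_ txS _] := Ed_twin cS xD xS.
by rewrite xS txS (tau_eK (Ed_FV cS xD)) /= orbC.
Qed.

Definition pdCG_of_atoms : CG p :=
  (equivalence_partition vtwin_rel [set: 'I_p], equivalence_partition etwin_rel Ed_dom).

Let vpartition := equivalence_partitionP vtwin_rel_equiv.
Let epartition := equivalence_partitionP etwin_rel_equiv.

Lemma Eset_pdCG_of_atoms : Eset pdCG_of_atoms = Ed_dom.
Proof. by case/and3P: epartition => /eqP. Qed.

Lemma pdCG_of_atoms_Vat i : ([set i] \in vcol pdCG_of_atoms) = (Vat i \in S).
Proof.
apply/idP/idP => [Pi|iS].
  apply: contraT => iS; case/and3P: vpartition => _ tI _.
  have := pblock_equivalence_partition vtwin_rel_equiv (in_setT i) (in_setT (tau i)).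
  rewrite (def_pblock tI Pi (set11 i)) /vtwin_rel iS eqxx orbT inE => /eqP h.
  by move: (tau_nofix i); rewrite h eqxx.
have -> : [set i] = [set j in [set: 'I_p] | vtwin_rel i j].
  by apply/setP => j; rewrite !inE /vtwin_rel iS /= orbF.
by apply/imsetP; exists i.
Qed.

Lemma pdCG_of_atoms_Eat e : ([set e] \in ecol pdCG_of_atoms) = (Eat e \in S).
Proof.
apply/idP/idP => [Pe|eA].
  apply: contraT => eA.
  have eD : e \in Ed_dom by rewrite -Eset_pdCG_of_atoms; apply: mem_cover Pe (set11 e).
  have eE : Ed e \in S by rewrite inE in eD.
  have [tE _ ne] := Ed_twin cS eE eA.
  have tD : te e \in Ed_dom by rewrite inE.
  case/and3P: epartition => _ tI _.
  have := pblock_equivalence_partition etwin_rel_equiv eD tD.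
  rewrite (def_pblock tI Pe (set11 e)) /etwin_rel eA eqxx orbT inE => /eqP h.
  by rewrite h eqxx in ne.
have -> : [set e] = [set f in Ed_dom | etwin_rel e f].
  apply/setP => f; rewrite !inE /etwin_rel eA /= orbF.
  by case: eqP => [->|]; rewrite ?andbF ?(Eat_Ed cS).
by apply/imsetP; exists e; rewrite // inE (Eat_Ed cS).
Qed.

Lemma atoms_pdCG_of_atoms : atoms pdCG_of_atoms = S.
Proof.
apply/setP => -[i|[e|e]].
- by rewrite atoms_Vat pdCG_of_atoms_Vat.
- by rewrite atoms_Ed Eset_pdCG_of_atoms inE.
- by rewrite atoms_Eat pdCG_of_atoms_Eat.
Qed.

Lemma pdCG_of_atoms_pdCG : is_pdCG tau pdCG_of_atoms.
Proof.
apply/and3P; split.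
- rewrite /is_CG /= Eset_pdCG_of_atoms vpartition epartition /=.
  by apply/subsetP => e; rewrite inE; apply: Ed_FV.
- apply/forallP => C; apply/implyP => /imsetP[x _ ->]; apply/existsP; exists x.
  apply/orP; case: (boolP (Vat x \in S)) => xS; [left | right];
    by apply/eqP/setP => y; rewrite !inE /vtwin_rel xS ?orbF.
- apply/forallP => D; apply/implyP => /imsetP[x xD ->]; apply/existsP; exists x.
  have xE : Ed x \in S by rewrite inE in xD.
  case: (boolP (Eat x \in S)) => xS.
    apply/orP; left; apply/eqP/setP => y; rewrite !inE /etwin_rel xS /= orbF.
    by case: eqP => [->|]; rewrite ?andbF ?xE.
  have [tE _ ne] := Ed_twin cS xE xS.
  apply/orP; right; rewrite (eq_sym x (te x)) ne andbT; apply/eqP/setP => y.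
  rewrite !inE /etwin_rel xS /=.
  by case: eqP => [->|_]; case: eqP => [->|]; rewrite ?andbF ?xE ?tE.
Qed.

End Realization.

Definition Lbb_at (S : {set atom}) (i : 'I_p) := (i < q) && (Vat i \in S).
Definition Ebb_at (S : {set atom}) (e : edge p) :=
  [&& Ed e \in S, e \in FL tau, Ed (te e) \in S, te e \in FR tau & Eat e \in S].

Lemma Lbb_atI S1 S2 i : Lbb_at (S1 :&: S2) i = Lbb_at S1 i && Lbb_at S2 i.
Proof. by rewrite /Lbb_at in_setI; case: (i < q). Qed.

Lemma Ebb_atI S1 S2 e : Ebb_at (S1 :&: S2) e = Ebb_at S1 e && Ebb_at S2 e.
Proof. by rewrite /Ebb_at !in_setI; do ![case: (_ \in _) => //=]. Qed.

Lemma mem_Lbb X i : (i \in Lbb q X) = Lbb_at (atoms X) i.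
Proof. by rewrite /Lbb_at !inE. Qed.

Lemma mem_Ebb X e : is_pdCG tau X -> (e \in Ebb tau X) = Ebb_at (atoms X) e.
Proof.
move=> HX; rewrite /Ebb /Ebb_at !inE /=.
case eE: (e \in Eset X) => //=.
have sFV : Eset X :&: FR tau \subset FV p.
  by apply/subsetP => f; rewrite inE => /andP[/(Eset_FV HX)].
have -> : (e \in te @: (Eset X :&: FR tau)) = (te e \in Eset X :&: FR tau).
  apply/imsetP/idP => [[f fB ->]|teB]; first by rewrite tau_eK ?(subsetP sFV).
  by exists (te e); rewrite ?tau_eK ?(Eset_FV HX).
by rewrite !inE -!andbA.
Qed.

Lemma Vat_Lbb_at S i : pd_closed S ->
  (Vat i \in S) = if i < q then Lbb_at S i else Lbb_at S (tau i).
Proof.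
by move=> cS; case: ifP => iq; rewrite /Lbb_at ?iq // tau_ltq iq -(Vat_tau cS).
Qed.

Lemma Eat_Ebb_at S e : pd_closed S -> (Eat e \in S) =
  (Ed e \in S) && [|| Ed (te e) \notin S, te e == e, Ebb_at S e | Ebb_at S (te e)].
Proof.
case=> _ S_Ed S_twin S_Eat S_FV; case eA: (Eat e \in S); last first.
  case eE: (Ed e \in S) => //=.
  have [tE tA ne] := S_twin _ eE (negbT eA).
  by rewrite tE (negbTE ne) /Ebb_at eA (negbTE tA) !andbF.
have eE := S_Ed _ eA; rewrite eE /=.
case tE: (Ed (te e) \in S) => //=; case: eqP => //= /eqP ne.
have eF := S_FV _ eE.
case/orP: (FL_or_FR eF ne) => h; apply/esym/orP; [left | right].
  by rewrite /Ebb_at eE h tE (FL_tau_e h) eA.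
by rewrite /Ebb_at tE (FR_tau_e h) (tau_eK eF) eE h S_Eat.
Qed.

(* The twin order sees only [E], [L] and the atomic edges of [F_L] with a
   twin; on a pd-closed set these determine all the atoms. *)
Lemma pd_closed_eq S1 S2 : pd_closed S1 -> pd_closed S2 ->
  (forall e, (Ed e \in S1) = (Ed e \in S2)) -> Lbb_at S1 =1 Lbb_at S2 ->
  Ebb_at S1 =1 Ebb_at S2 -> S1 = S2.
Proof.
move=> c1 c2 HE HL HB; apply/setP => -[i|[e|e]].
- by rewrite (Vat_Lbb_at _ c1) (Vat_Lbb_at _ c2) !HL.
- exact: HE.
- by rewrite (Eat_Ebb_at _ c1) (Eat_Ebb_at _ c2) !HE !HB.
Qed.

Lemma is_meet_t_atoms F H M :
  is_pdCG tau F -> is_pdCG tau H -> is_pdCG tau M ->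
  pd_closed (atoms F :&: atoms H) ->
  is_meet_t q tau F H M <-> atoms M = atoms F :&: atoms H.
Proof.
move=> HF HH HM cFH; split => [[_ EM LM BM]|SM].
  apply: pd_closed_eq (atoms_pd_closed HM) cFH _ _ _ => [e|i|e].
  - by rewrite in_setI !atoms_Ed EM in_setI.
  - by rewrite -mem_Lbb LM in_setI !mem_Lbb Lbb_atI.
  - by rewrite -(mem_Ebb e HM) BM in_setI !mem_Ebb // Ebb_atI.
split => //.
- by apply/setP => e; rewrite in_setI -!atoms_Ed SM in_setI.
- by apply/setP => i; rewrite in_setI !mem_Lbb SM Lbb_atI.
- by apply/setP => e; rewrite in_setI !mem_Ebb // SM Ebb_atI.
Qed.

Lemma is_meet_s_atoms F H M :
  is_pdCG tau F -> is_pdCG tau H -> is_pdCG tau M ->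
  pd_closed (atoms F :&: atoms H) ->
  is_meet_s tau F H M <-> atoms M = atoms F :&: atoms H.
Proof.
move=> HF HH HM cFH; split => [[_ MF MH univ]|SM].
  have HK := pdCG_of_atoms_pdCG cFH; have SK := atoms_pdCG_of_atoms cFH.
  have /(le_s_atoms HK HM) KM : le_s (pdCG_of_atoms (atoms F :&: atoms H)) M.
    by apply: univ => //; apply/le_s_atoms; rewrite // SK ?subsetIl ?subsetIr.
  move: MF MH => /(le_s_atoms HM HF) MF /(le_s_atoms HM HH) MH.
  by apply/eqP; rewrite eqEsubset subsetI MF MH -SK KM.
split => //.
- by apply/le_s_atoms; rewrite // SM subsetIl.
- by apply/le_s_atoms; rewrite // SM subsetIr.
- move=> K HK /(le_s_atoms HK HF) KF /(le_s_atoms HK HH) KH.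
  by apply/(le_s_atoms HK HM); rewrite SM subsetI KF KH.
Qed.

(** * Covering *)

Lemma pd_closedD_Vat S i : pd_closed S -> pd_closed (S :\ Vat i :\ Vat (tau i)).
Proof.
case=> S_tau S_Ed S_twin S_Eat S_FV; split.
- move=> j; rewrite !inE ?atom_eqE S_tau (inj_eq (can_inj tau_invol)).
  by rewrite (can2_eq tau_invol tau_invol) andbCA.
- by move=> e; rewrite !inE /= ?atom_eqE; apply: S_Ed.
- by move=> e; rewrite !inE /= ?atom_eqE; apply: S_twin.
- by move=> e; rewrite !inE /= ?atom_eqE; apply: S_Eat.
- by move=> f /setD1P[_ /setD1P[_ /S_FV]].
Qed.

Lemma pd_closedD_Eat S e : pd_closed S -> Eat e \in S -> pd_closed (S :\ Ed e :\ Eat e).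
Proof.
case=> S_tau S_Ed S_twin S_Eat S_FV eA; split.
- by move=> j; rewrite !inE /= ?atom_eqE S_tau.
- by move=> f; rewrite !inE /= ?atom_eqE => /andP[-> /S_Ed ->]; rewrite andbT.
- move=> f; rewrite !inE /= ?atom_eqE => /andP[fe fE]; rewrite fe /= => fA.
  have [tE tA ne] := S_twin _ fE fA.
  rewrite tE (negbTE tA) ne andbF andbT; split => //.
  by apply: contraNneq tA => ->.
- move=> f; rewrite !inE /= ?atom_eqE => /andP[fe fE] /andP[tfe tE] /andP[_ fA].
  by rewrite tfe (S_Eat _ fE tE fA).
- by move=> f /setD1P[_ /setD1P[_ /S_FV]].
Qed.

Lemma pd_closedD_Ed S e : pd_closed S -> Ed e \in S -> Eat e \notin S ->
  pd_closed (S :\ Ed e :\ Ed (te e)).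
Proof.
case=> S_tau S_Ed S_twin S_Eat S_FV eE eA.
have [tE tA ne] := S_twin _ eE eA; have eF := S_FV _ eE.
split.
- by move=> j; rewrite !inE /= ?atom_eqE S_tau.
- move=> f; rewrite !inE /= ?atom_eqE => fA; rewrite (S_Ed _ fA) andbT.
  by apply/andP; split; [apply: contraNneq tA | apply: contraNneq eA] => <-.
- move=> f; rewrite !inE /= ?atom_eqE => /and3P[f1 f2 fE] fA.
  have [tfE tfA tne] := S_twin _ fE fA; have fF := S_FV _ fE.
  rewrite tfE tfA tne andbT; split => //; apply/andP; split.
    by apply: contra f2 => /eqP/(tau_e_inj fF eF) ->.
  by apply: contra f1 => /eqP <-; rewrite tau_eK.
- move=> f; rewrite !inE /= ?atom_eqE => /and3P[_ _ fE] /and3P[_ _ tfE] fA.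
  exact: S_Eat.
- by move=> f /setD1P[_ /setD1P[_ /S_FV]].
Qed.

Lemma pd_closedD_Eat_twin S e : pd_closed S ->
  Ed e \in S -> Ed (te e) \in S -> te e != e -> pd_closed (S :\ Eat e :\ Eat (te e)).
Proof.
case=> S_tau S_Ed S_twin S_Eat S_FV eE tE ne; have eF := S_FV _ eE.
split.
- by move=> j; rewrite !inE /= ?atom_eqE S_tau.
- by move=> f; rewrite !inE /= ?atom_eqE => /and3P[_ _ /S_Ed].
- move=> f; rewrite !inE /= ?atom_eqE => fE.
  case fA: (Eat f \in S); last first.
    by have [tfE tfA tne] := S_twin _ fE (negbT fA); rewrite tfE (negbTE tfA) !andbF.
  rewrite andbT negb_and !negbK => /orP[/eqP->|/eqP->].
    by rewrite tau_eK // eE eqxx /= (eq_sym e) ne.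
  by rewrite tE eqxx.
- move=> f; rewrite !inE /= ?atom_eqE => fE tfE /and3P[f1 f2 fA]; have fF := S_FV _ fE.
  rewrite (S_Eat _ fE tfE fA) andbT; apply/andP; split.
    by apply: contra f2 => /eqP/(tau_e_inj fF eF) ->.
  by apply: contra f1 => /eqP <-; rewrite tau_eK.
- by move=> f /setD1P[_ /setD1P[_ /S_FV]].
Qed.

Lemma pd_closed_pair_removal S T u : pd_closed S -> pd_closed T -> T \subset S ->
  u \in S -> u \notin T ->
  exists u', [/\ u' != u, u' \in S, u' \notin T & pd_closed (S :\ u :\ u')].
Proof.
move=> cS cT /subsetP sTS.
case: u => [i|[e|e]] uS uT.
- exists (Vat (tau i)); split; rewrite -?(Vat_tau cS) -?(Vat_tau cT) //.
    exact: tau_nofix.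
  exact: pd_closedD_Vat.
- have [eA|eA] := boolP (Eat e \in S).
    exists (Eat e); split => //; last exact: pd_closedD_Eat.
    by apply: contra uT; apply: Eat_Ed.
  have [tE tA ne] := Ed_twin cS uS eA.
  exists (Ed (te e)); split => //; last exact: pd_closedD_Ed.
  apply/negP => tT.
  have [] := Ed_twin cT tT (contra (sTS _) tA).
  by rewrite tau_eK ?(Ed_FV cS uS) // (negbTE uT).
- have eE := Eat_Ed cS uS.
  have [eT|eT] := boolP (Ed e \in T).
    have [tT tA ne] := Ed_twin cT eT uT.
    exists (Eat (te e)); split => //.
    + by apply: (Eat_twin cS) => //; apply: sTS.
    + by apply: pd_closedD_Eat_twin => //; apply: sTS.
  exists (Ed e); split => //.
  have -> : S :\ Eat e :\ Ed e = S :\ Ed e :\ Eat e.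
    by apply/setP => w; rewrite !inE andbCA.
  exact: pd_closedD_Eat.
Qed.

Lemma covered_atoms_pair F G : is_pdCG tau F -> is_pdCG tau G -> covered tau F G ->
  atoms F \subset atoms G /\ exists a b, a != b /\ atoms G :\: atoms F = [set a; b].
Proof.
move=> HF HG [[/(le_s_atoms HF HG) sFG nFG] no_mid]; split => //.
have /subsetPn [u uG uF] : ~~ (atoms G \subset atoms F).
  apply/negP => sGF; apply: nFG; apply: atoms_inj => //.
  by apply/eqP; rewrite eqEsubset sFG.
have [u' [nu u'G u'F cK]] :=
  pd_closed_pair_removal (atoms_pd_closed HG) (atoms_pd_closed HF) sFG uG uF.
pose K := pdCG_of_atoms (atoms G :\ u :\ u').
have HK : is_pdCG tau K := pdCG_of_atoms_pdCG cK.
have SK : atoms K = atoms G :\ u :\ u' := atoms_pdCG_of_atoms cK.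
have KF : K = F.
  apply/eqP; apply: contraT => nKF; case: no_mid; exists K; split => //.
  split; split.
  - apply/le_s_atoms; rewrite // SK; apply/subsetP => w wF.
    rewrite !in_setD1 (subsetP sFG _ wF) andbT.
    by apply/andP; split; [apply: contraNneq u'F | apply: contraNneq uF] => <-.
  - by move=> E; rewrite E eqxx in nKF.
  - by apply/le_s_atoms; rewrite // SK; apply/subsetP => w; rewrite !inE => /and3P[].
  - by move=> E; move: uG; rewrite -E SK !inE eqxx andbF.
exists u', u; split => //.
by rewrite -KF SK setD_setD1_2.
Qed.

Lemma pair_covered M H : is_pdCG tau M -> is_pdCG tau H -> atoms M \subset atoms H ->
  (exists a b, atoms H :\: atoms M = [set a; b]) -> covered tau M H.
Proof.
move=> HM HH sMH [a [b Dab]].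
split.
  split; first exact/le_s_atoms.
  by move=> E; have := set21 a b; rewrite -Dab E setDv inE.
case=> J [HJ [[/(le_s_atoms HM HJ) sMJ nMJ] [/(le_s_atoms HJ HH) sJH nJH]]].
have /subsetPn [v vH vJ] : ~~ (atoms H \subset atoms J).
  apply/negP => sHJ; apply: nJH; apply: atoms_inj => //.
  by apply/eqP; rewrite eqEsubset sJH.
have [v' [nv v'H v'J _]] :=
  pd_closed_pair_removal (atoms_pd_closed HH) (atoms_pd_closed HJ) sJH vH vJ.
have /subsetPn [w wJ wM] : ~~ (atoms J \subset atoms M).
  apply/negP => sJM; apply: nMJ; apply: atoms_inj => //.
  by apply/eqP; rewrite eqEsubset sMJ.
have notM x : x \notin atoms J -> x \notin atoms M by apply: contra; apply: (subsetP sMJ).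
apply: (set2_no_triple (a := a) (b := b) (x := v) (y := v') (z := w)).
- by rewrite eq_sym.
- by apply: contraNneq vJ => ->.
- by apply: contraNneq v'J => ->.
- by rewrite -Dab in_setD notM.
- by rewrite -Dab in_setD notM.
- by rewrite -Dab in_setD wM (subsetP sJH).
Qed.

(* An atom of [T] missing from [S] yields one that the twin order sees: a
   vertex of L, an edge, or an atomic edge of F_L whose twin is atomic. *)
Lemma lost_not_le_t S T u M1 M2 : pd_closed S -> pd_closed T -> S \subset T ->
  u \in T :\: S -> is_pdCG tau M1 -> is_pdCG tau M2 ->
  T :\: S \subset atoms M1 -> atoms M2 \subset S -> ~ le_t q tau M1 M2.
Proof.
move=> cS cT /subsetP sST uTS HM1 HM2 /subsetP lostM1 /subsetP M2S [sE sL sB].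
have notM2 w : w \notin S -> w \notin atoms M2 by apply: contra; apply: M2S.
have lost_Ed e : Ed e \in T -> Ed e \notin S -> False.
  move=> eT eS; have eM1 : e \in Eset M1 by rewrite -atoms_Ed lostM1 // in_setD eS.
  by move/negP: (notM2 _ eS); rewrite atoms_Ed (subsetP sE).
case/setDP: uTS; case: u => [i|[e|e]] uT uS.
- pose j := if i < q then i else tau i.
  have jq : j < q by rewrite /j; case: ifP => // /negbT; rewrite tau_ltq.
  have jS : Vat j \notin S by rewrite /j; case: ifP; rewrite // -(Vat_tau cS).
  have jT : Vat j \in T by rewrite /j; case: ifP; rewrite // -(Vat_tau cT).
  have : j \in Lbb q M1 by rewrite mem_Lbb /Lbb_at jq lostM1 // in_setD jS.
  move/(subsetP sL); rewrite mem_Lbb /Lbb_at => /andP[_].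
  exact/negP/notM2.
- exact: lost_Ed uT uS.
- have eT := Eat_Ed cT uT.
  have [eS|] := boolP (Ed e \in S); last exact: lost_Ed.
  have [tS tA ne] := Ed_twin cS eS uS.
  have tAT : Eat (te e) \in T by apply: (Eat_twin cT) => //; apply: sST.
  have eF := Ed_FV cT eT.
  have [r [rL rR rA trA]] : exists r, [/\ r \in FL tau, te r \in FR tau,
      Eat r \in T :\: S & Eat (te r) \in T :\: S].
    case/orP: (FL_or_FR eF ne) => h.
      by exists e; rewrite (FL_tau_e h) !in_setD uS uT tA tAT.
    by exists (te e); rewrite (FR_tau_e h) tau_eK // !in_setD uS uT tA tAT.
  have cM1 := atoms_pd_closed HM1.
  have A1 := lostM1 _ rA; have A2 := lostM1 _ trA.
  have : r \in Ebb tau M1.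
    by rewrite mem_Ebb // /Ebb_at rL rR A1 (Eat_Ed cM1 A1) (Eat_Ed cM1 A2).
  move/(subsetP sB); rewrite mem_Ebb // /Ebb_at => /and5P[_ _ _ _].
  by apply/negP/notM2; case/setDP: rA.
Qed.

(** * Graphs covered by a common graph *)

Section CoveredFamily.
Variables (G : CG p) (A : CG p -> Prop).
Hypothesis HG : is_pdCG tau G.
Hypothesis HA : forall F, A F -> is_pdCG tau F.
Hypothesis Hinc : t_incomparable q tau A.
Hypothesis Hcov : forall F, A F -> covered tau F G.

Local Notation lost F := (atoms G :\: atoms F).

Let cG := atoms_pd_closed HG.

Lemma atoms_sub_G F : A F -> atoms F \subset atoms G.
Proof. by move=> AF; case: (covered_atoms_pair (HA AF) HG (Hcov AF)). Qed.

Lemma lost_pair F : A F -> exists a b, a != b /\ lost F = [set a; b].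
Proof. by move=> AF; case: (covered_atoms_pair (HA AF) HG (Hcov AF)). Qed.

Lemma lost_inj F F' u v : A F -> A F' -> u != v ->
  u \in lost F -> v \in lost F -> u \in lost F' -> v \in lost F' -> F = F'.
Proof.
move=> AF AF' nuv uF vF uF' vF'.
have lostE X : A X -> u \in lost X -> v \in lost X -> lost X = [set u; v].
  move=> AX uX vX; have [a [b [_ eX]]] := lost_pair AX.
  by rewrite eX; apply: set2_eq; rewrite -?eX.
apply: atoms_inj (HA AF) (HA AF') _.
by rewrite -(setDDK (atoms_sub_G AF)) -(setDDK (atoms_sub_G AF')) (lostE F) // (lostE F').
Qed.

Lemma lost_Eat_le_t F F' e : A F -> A F' ->
  Eat e \in lost F -> Ed e \in atoms F -> Ed e \notin atoms F' -> le_t q tau F' F.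
Proof.
move=> AF AF' eAl eF eF'.
have cF := atoms_pd_closed (HA AF); have eFV := Ed_FV cF eF.
have sF := subsetP (atoms_sub_G AF).
have [eAG eAF] := setDP eAl.
have [tF tAF ne] := Ed_twin cF eF eAF.
have tAl : Eat (te e) \in lost F.
  by rewrite in_setD tAF; apply: (Eat_twin cG) => //; apply: sF.
have lostE : lost F = [set Eat e; Eat (te e)].
  have [a [b [_ eL]]] := lost_pair AF.
  by rewrite eL; apply: set2_eq; rewrite -?eL // atom_eqE eq_sym.
have keep w : w \in atoms F' -> w != Eat e -> w != Eat (te e) -> w \in atoms F.
  move=> wF' n1 n2; apply: contraT => wF.
  have : w \in lost F by rewrite in_setD wF (subsetP (atoms_sub_G AF') _ wF').
  by rewrite lostE !inE (negbTE n1) (negbTE n2).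
split; apply/subsetP.
- by move=> f; rewrite -!atoms_Ed => /keep; apply.
- by move=> i; rewrite !mem_Lbb /Lbb_at => /andP[-> /keep]; apply.
- move=> f; rewrite !mem_Ebb ?HA // /Ebb_at => /and5P[h1 h2 h3 h4 h5].
  have fe : f != e by apply: contraNneq eF' => <-.
  have fte : f != te e.
    by apply: contraNneq eF' => E; rewrite -(tau_eK eFV) -E.
  by apply/and5P; split => //; apply: keep; rewrite ?atom_eqE.
Qed.

Lemma lost_sub_atoms F F' u : A F -> A F' -> F <> F' -> u \in lost F -> u \in atoms F'.
Proof.
move=> AF AF' nFF' ul; have [//|uF'] := boolP (u \in atoms F'); exfalso.
have cF := atoms_pd_closed (HA AF); have cF' := atoms_pd_closed (HA AF').
have [uG uF] := setDP ul.
have ul' : u \in lost F' by rewrite in_setD uF' uG.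
have shared w : w != u -> w \in lost F -> w \in lost F' -> False.
  by move=> nwu wl wl'; apply: nFF'; apply: (lost_inj AF AF' nwu).
case: u uG uF uF' ul ul' shared => [i|[e|e]] uG uF uF' ul ul' shared.
- have tl X : A X -> Vat i \in lost X -> Vat (tau i) \in lost X.
    move=> AX; rewrite !in_setD -(Vat_tau cG).
    by rewrite -(Vat_tau (atoms_pd_closed (HA AX))).
  by apply: (shared (Vat (tau i))); rewrite ?atom_eqE ?tau_nofix ?tl.
- have [eAG|eAG] := boolP (Eat e \in atoms G).
    apply: (shared (Eat e)) => //; rewrite in_setD eAG andbT.
      by apply: contra uF; apply: Eat_Ed.
    by apply: contra uF'; apply: Eat_Ed.
  have [tG tAG ne] := Ed_twin cG uG eAG.
  have eFV := Ed_FV cG uG.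
  have tl X : A X -> Ed e \notin atoms X -> Ed (te e) \in lost X.
    move=> AX eX; rewrite in_setD tG andbT; apply/negP => tX.
    have tAX : Eat (te e) \notin atoms X.
      by apply: contra tAG; apply: (subsetP (atoms_sub_G AX)).
    by have [] := Ed_twin (atoms_pd_closed (HA AX)) tX tAX; rewrite tau_eK // (negbTE eX).
  by apply: (shared (Ed (te e))); rewrite ?atom_eqE ?ne ?tl.
- have eG := Eat_Ed cG uG.
  have tA X : A X -> Ed e \in atoms X -> Eat e \notin atoms X -> Eat (te e) \in lost X.
    move=> AX eX eAX; have [tX tAX _] := Ed_twin (atoms_pd_closed (HA AX)) eX eAX.
    by rewrite in_setD tAX (Eat_twin cG) // (subsetP (atoms_sub_G AX)).
  have [eF|eF] := boolP (Ed e \in atoms F); have [eF'|eF'] := boolP (Ed e \in atoms F').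
  + have [_ _ ne] := Ed_twin cF eF uF.
    by apply: (shared (Eat (te e))); rewrite ?atom_eqE ?ne ?tA.
  + exact: (Hinc AF' AF (nesym nFF') (lost_Eat_le_t AF AF' ul eF eF')).
  + exact: (Hinc AF AF' nFF' (lost_Eat_le_t AF' AF ul' eF' eF)).
  + by apply: (shared (Ed e)); rewrite // in_setD ?eF ?eF' eG.
Qed.

Lemma Ed_twin_shared F H e : A F -> A H -> F <> H ->
  Ed e \in atoms F -> Ed e \in atoms H -> Eat e \notin atoms F -> Ed (te e) \in atoms H.
Proof.
move=> AF AH nFH eF eH eAF; apply: contraT => tH.
have cF := atoms_pd_closed (HA AF); have cH := atoms_pd_closed (HA AH).
have eAH : Eat e \in atoms H.
  by apply: contraT => eAH; have [] := Ed_twin cH eH eAH; rewrite (negbTE tH).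
have [tF tAF _] := Ed_twin cF eF eAF.
have tAl : Eat (te e) \in lost F.
  rewrite in_setD tAF; apply: (Eat_twin cG).
  - exact: (subsetP (atoms_sub_G AF)).
  - exact: (subsetP (atoms_sub_G AF)).
  - exact: (subsetP (atoms_sub_G AH)).
by rewrite (Eat_Ed cH (lost_sub_atoms AF AH nFH tAl)) in tH.
Qed.

Lemma pd_closed_atomsI F H : A F -> A H -> F <> H -> pd_closed (atoms F :&: atoms H).
Proof.
move=> AF AH nFH.
have cF := atoms_pd_closed (HA AF); have cH := atoms_pd_closed (HA AH).
split.
- by move=> i; rewrite !in_setI (Vat_tau cF) (Vat_tau cH).
- by move=> e; rewrite !in_setI => /andP[/(Eat_Ed cF) -> /(Eat_Ed cH) ->].
- move=> e; rewrite !in_setI => /andP[eF eH]; rewrite negb_and => /orP[eA|eA].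
    have [tF tA ne] := Ed_twin cF eF eA.
    by rewrite tF (negbTE tA) (Ed_twin_shared AF AH nFH eF eH eA).
  have [tH tA ne] := Ed_twin cH eH eA.
  by rewrite tH (negbTE tA) andbF (Ed_twin_shared AH AF (nesym nFH) eH eF eA).
- move=> e; rewrite !in_setI => /andP[eF eH] /andP[tF tH] /andP[eAF eAH].
  by rewrite (Eat_twin cF) ?(Eat_twin cH).
- by move=> e; rewrite in_setI => /andP[/(Ed_FV cF)].
Qed.

Lemma meets_t_atoms H M : A H -> meets_t q tau A H M ->
  exists F, [/\ A F, F <> H, is_pdCG tau M & atoms M = atoms F :&: atoms H].
Proof.
move=> AH [F [AF nFH mM]]; have HM : is_pdCG tau M by case: mM.
exists F; split => //.
exact/(is_meet_t_atoms (HA AF) (HA AH) HM (pd_closed_atomsI AF AH nFH)).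
Qed.

Lemma meets_s_iff_meets_t H M : A H -> meets_s tau A H M <-> meets_t q tau A H M.
Proof.
move=> AH; have HH := HA AH.
have meetE F : A F -> F <> H -> is_pdCG tau M ->
    is_meet_s tau F H M <-> is_meet_t q tau F H M.
  move=> AF nFH HM; have HF := HA AF; have cFH := pd_closed_atomsI AF AH nFH.
  exact: iff_trans (is_meet_s_atoms HF HH HM cFH)
                   (iff_sym (is_meet_t_atoms HF HH HM cFH)).
split=> -[F [AF nFH mM]]; exists F; split => //.
  by apply/(meetE F AF nFH) => //; case: mM.
by apply/(meetE F AF nFH) => //; case: mM.
Qed.

Lemma meets_t_incomparable H : A H -> t_incomparable q tau (meets_t q tau A H).
Proof.
move=> AH M1 M2 /(meets_t_atoms AH) [F1 [AF1 nF1H HM1 SM1]].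
move=> /(meets_t_atoms AH) [F2 [AF2 nF2H HM2 SM2]] nM.
have nF : F1 <> F2 by move=> E; apply: nM; apply: atoms_inj => //; rewrite SM1 SM2 E.
have [a [b [_ lostE]]] := lost_pair AF2.
apply: (lost_not_le_t (u := a) (atoms_pd_closed (HA AF2)) cG (atoms_sub_G AF2)) => //.
- by rewrite lostE set21.
- apply/subsetP => w wl; rewrite SM1 in_setI.
  by rewrite (lost_sub_atoms AF2 AF1 (nesym nF) wl) (lost_sub_atoms AF2 AH nF2H wl).
- by rewrite SM2 subsetIl.
Qed.

Lemma meets_t_covered H M : A H -> meets_t q tau A H M -> covered tau M H.
Proof.
move=> AH /(meets_t_atoms AH) [F [AF nFH HM SM]].
have [a [b [_ lostE]]] := lost_pair AF.
apply: pair_covered HM (HA AH) _ _; first by rewrite SM subsetIr.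
exists a, b; rewrite -lostE SM; apply/setP => w; rewrite !in_setD in_setI.
have [wH|wH] := boolP (w \in atoms H).
  by rewrite !andbT (subsetP (atoms_sub_G AH) _ wH) andbT.
rewrite !andbF; apply/esym/negbTE; apply: contra wH => wl.
by apply: (lost_sub_atoms AF AH nFH); rewrite in_setD.
Qed.

End CoveredFamily.
End PairedData.

Theorem corollary11 (p q : nat) (tau : 'I_p -> 'I_p)
  (tau_invol : involutive tau) (tau_nofix : forall i, tau i != i)
  (tau_LR : tau @: Lset p q = Rset p q)
  (G : CG p) (A : CG p -> Prop)
  (HG : is_pdCG tau G)
  (HA : forall F, A F -> is_pdCG tau F)
  (Hinc : t_incomparable q tau A)
  (Hcov : forall F, A F -> covered tau F G) :
  forall H, A H ->
    [/\ (forall M, meets_s tau A H M <-> meets_t q tau A H M),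
        t_incomparable q tau (meets_t q tau A H)
      & forall F, meets_t q tau A H F -> covered tau F H].
Proof.
move=> H AH; split.
- by move=> M; apply: (meets_s_iff_meets_t tau_invol tau_nofix tau_LR HG HA Hinc Hcov).
- exact: (meets_t_incomparable tau_invol tau_nofix tau_LR HG HA Hinc Hcov).
- by move=> M; apply: (meets_t_covered tau_invol tau_nofix tau_LR HG HA Hinc Hcov).
Qed.
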